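(* There exists a protocol that estimates the sharpness $\mathcal{S}(\{M_i\}_i)=\frac{1}{d}\sum_i\operatorname{Tr}(M_i^2)$ with constant additive error, and thus solves the black-box distinguishing task below with constant success probability, using $\mathcal{O}(1)$ queries, provided that the black box outputs both classical outcomes and post-measurement quantum states $\rho_i = K_i\rho K_i^\dagger/\operatorname{Tr}(K_i\rho K_i^\dagger)$, and the measurement operators $K_i$ are normal operators.
   Context: A quantum measurement on a $d$-dimensional system is described by measurement (Kraus) operators $\{K_i\}_i$ with $\sum_i K_i^\dagger K_i = \mathbb{I}$ and POVM $\{M_i = K_i^\dagger K_i\}_i$; outcome $i$ occurs with probability $\operatorname{Tr}(\rho K_i^\dagger K_i)$ and the post-measurement state is $\rho_i = K_i\rho K_i^\dagger/\operatorname{Tr}(K_i\rho K_i^\dagger)$. Black-box distinguishing task: given query access to a measurement device, distinguish between, with equal prior probability, (i) a device that outputs $i \in \{0,\dots,d-1\}$ uniformly at random and leaves the input state unchanged (sharpness $1/d$), and (ii) a device performing the projective measurement $\{\Pi_i = U |i\rangle\langle i| U^\dagger\}_{i=0}^{d-1}$ for an unknown Haar random unitary $U$, outputting $i$ and collapsing the input to the post-measurement state (sharpness $1$). The protocol: prepare the maximally mixed state $\mathbb{I}/d$, measure it and keep the post-measurement state, measure again with the same device, and record whether the two outcomes agree; the agreement probability equals the sharpness when $[K_i,K_i^\dagger]=0$. *)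

From HB Require Import structures.
From mathcomp Require Import all_boot all_order all_algebra.
From mathcomp Require Import algC.
Set Implicit Arguments. Unset Strict Implicit. Unset Printing Implicit Defensive.
Import Order.TTheory GRing.Theory Num.Theory.
Local Open Scope ring_scope.

Definition adj (m n : nat) (A : 'M[algC]_(m, n)) : 'M[algC]_(n, m) :=
  (map_mx (fun z : algC => z^*) A)^T.

Definition is_kraus (d n : nat) (K : 'I_n -> 'M[algC]_d) : Prop :=
  \sum_(i < n) adj (K i) *m K i = 1%:M.

Definition normal_op (d : nat) (A : 'M[algC]_d) : Prop :=
  A *m adj A = adj A *m A.

Definition unitary (d : nat) (U : 'M[algC]_d) : Prop :=
  adj U *m U = 1%:M /\ U *m adj U = 1%:M.

Definition povm (d n : nat) (K : 'I_n -> 'M[algC]_d) (i : 'I_n) : 'M[algC]_d :=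
  adj (K i) *m K i.

Definition sharpness (d n : nat) (K : 'I_n -> 'M[algC]_d) : algC :=
  (d%:R)^-1 * \sum_(i < n) \tr (povm K i *m povm K i).

Definition meas_prob (d n : nat) (K : 'I_n -> 'M[algC]_d) (rho : 'M[algC]_d)
  (i : 'I_n) : algC := \tr (rho *m povm K i).

Definition post_state (d n : nat) (K : 'I_n -> 'M[algC]_d) (rho : 'M[algC]_d)
  (i : 'I_n) : 'M[algC]_d :=
  (\tr (K i *m rho *m adj (K i)))^-1 *: (K i *m rho *m adj (K i)).

Definition max_mixed (d : nat) : 'M[algC]_d := (d%:R)^-1 *: 1%:M.

(* One round of the protocol: prepare I/d, measure (outcome i, keep the
   post-measurement state), measure again (outcome j); probability that i = j. *)
Definition agree_prob (d n : nat) (K : 'I_n -> 'M[algC]_d) : algC :=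
  \sum_(i < n) meas_prob K (max_mixed d) i
               * meas_prob K (post_state K (max_mixed d) i) i.

(* N independent rounds (2N queries): probability that the number k of
   rounds with agreeing outcomes satisfies E, when each round agrees with
   probability p. *)
Definition binom_prob (N : nat) (p : algC) (E : pred nat) : algC :=
  \sum_(k < N.+1 | E k) 'C(N, k)%:R * p ^+ k * (1 - p) ^+ (N - k).

(* Device (i): uniformly random outcome in {0..d-1}, state unchanged:
   K_i = (1/sqrt d) I. *)
Definition unif_dev (d : nat) : 'I_d -> 'M[algC]_d :=
  fun _ => (sqrtC d%:R)^-1 *: 1%:M.
Arguments unif_dev : clear implicits.

Definition proj_dev (d : nat) (U : 'M[algC]_d) : 'I_d -> 'M[algC]_d :=
  fun i => U *m delta_mx i i *m adj U.

(* Success probability (equal priors) of the protocol that runs N rounds and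
   answers "device (ii)" iff decide k, k = number of agreeing rounds. *)
Definition success (N : nat) (decide : nat -> bool) (d n0 n1 : nat)
  (K0 : 'I_n0 -> 'M[algC]_d) (K1 : 'I_n1 -> 'M[algC]_d) : algC :=
  2^-1 * binom_prob N (agree_prob K0) (fun k => ~~ decide k)
  + 2^-1 * binom_prob N (agree_prob K1) decide.

From HB Require Import structures.
From mathcomp Require Import all_boot all_order all_algebra.
From mathcomp Require Import algC.
From mathcomp Require Import ring.
Set Implicit Arguments. Unset Strict Implicit. Unset Printing Implicit Defensive.
Import Order.TTheory GRing.Theory Num.Theory.
Local Open Scope ring_scope.

(* For a normal Kraus operator K_i, measuring the post-measurement state of
   I/d again repeats the outcome i with probability Tr(M_i^2)/Tr(M_i), because
   K K^† K^† K = (K^† K)^2; hence one round of the protocol agrees with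
   probability exactly the sharpness S, which lies in [0, 1].  The number of
   agreeing rounds among N is binomial(N, S), whose variance N S (1 - S) is at
   most N, so by Chebyshev's inequality k/N is eps-close to S except with
   probability at most 1/(N eps^2), whatever d and K are.  For the
   distinguishing task, the uniform device has S = 1/d <= 1/2 and the
   projective one S = 1, so a single round answering "projective" iff the two
   outcomes agree succeeds with probability 1 - 1/(2d) >= 3/4. *)

Lemma adjE m n (A : 'M[algC]_(m, n)) i j : adj A i j = (A j i)^*.
Proof. by rewrite /adj !mxE. Qed.

Lemma adjK m n (A : 'M[algC]_(m, n)) : adj (adj A) = A.
Proof. by apply/matrixP=> i j; rewrite !adjE conjCK. Qed.

Lemma adjM m n p (A : 'M[algC]_(m, n)) (B : 'M[algC]_(n, p)) :
  adj (A *m B) = adj B *m adj A.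
Proof.
apply/matrixP=> i j; rewrite !mxE rmorph_sum; apply: eq_bigr => k _.
by rewrite !adjE rmorphM mulrC.
Qed.

Lemma adj_scalar n (c : algC) : adj (c%:M : 'M_n) = c^*%:M.
Proof.
apply/matrixP=> i j; rewrite adjE !mxE eq_sym.
by case: (i == j); rewrite ?rmorph0 ?rmorph_nat ?mulr1n ?mulr0n.
Qed.

Lemma adj_delta n (i j : 'I_n) : adj (delta_mx i j) = delta_mx j i.
Proof.
apply/matrixP=> a b; rewrite adjE !mxE.
by case: (a == j); case: (b == i); rewrite /= ?rmorph0 ?rmorph1.
Qed.

Lemma mxtrace_mul_adj m n (A : 'M[algC]_(m, n)) :
  \tr (A *m adj A) = \sum_i \sum_j `|A i j| ^+ 2.
Proof.
apply: eq_bigr => i _; rewrite mxE; apply: eq_bigr => j _.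
by rewrite adjE normCK.
Qed.

Lemma mxtrace_mul_adj_ge0 m n (A : 'M[algC]_(m, n)) : 0 <= \tr (A *m adj A).
Proof.
rewrite mxtrace_mul_adj; apply: sumr_ge0 => i _; apply: sumr_ge0 => j _.
exact: exprn_ge0.
Qed.

Lemma mxtrace_mul_adj_eq0 m n (A : 'M[algC]_(m, n)) :
  \tr (A *m adj A) = 0 -> A = 0.
Proof.
rewrite mxtrace_mul_adj => /eqP; rewrite psumr_eq0; last first.
  by move=> i _; apply: sumr_ge0 => j _; apply: exprn_ge0.
move=> /allP A0; apply/matrixP=> i j; rewrite mxE.
move: (A0 i (mem_index_enum i)); rewrite /= psumr_eq0 => [|k _]; last first.
  exact: exprn_ge0.
by move=> /allP /(_ j (mem_index_enum j)); rewrite /= sqrf_eq0 normr_eq0 => /eqP.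
Qed.

Lemma mxtrace_povmM_ge0 d n (K : 'I_n -> 'M[algC]_d) i j :
  0 <= \tr (povm K i *m povm K j).
Proof.
rewrite /povm -!mulmxA mxtrace_mulC !mulmxA.
have -> : K i *m adj (K j) *m K j *m adj (K i)
          = K i *m adj (K j) *m adj (K i *m adj (K j)).
  by rewrite adjM adjK !mulmxA.
exact: mxtrace_mul_adj_ge0.
Qed.

Lemma sharpness_ge0 d n (K : 'I_n -> 'M[algC]_d) : 0 <= sharpness K.
Proof.
apply: mulr_ge0; first by rewrite invr_ge0 ler0n.
by apply: sumr_ge0 => i _; apply: mxtrace_povmM_ge0.
Qed.

(* Tr(M_i^2) <= sum_j Tr(M_i M_j) = Tr(M_i), and sum_i Tr(M_i) = Tr(I) = d. *)
Lemma sharpness_le1 d n (K : 'I_n -> 'M[algC]_d) :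
  (0 < d)%N -> is_kraus K -> sharpness K <= 1.
Proof.
move=> d_gt0 krausK.
have trM_sum : \sum_i \sum_j \tr (povm K i *m povm K j) = d%:R.
  rewrite -[RHS]mxtrace1 -[1%:M]mulmx1 -krausK mulmx_suml raddf_sum.
  by apply: eq_bigr => i _; rewrite mulmx_sumr raddf_sum.
rewrite /sharpness mulrC ler_pdivrMr ?ltr0n // mul1r -trM_sum.
apply: ler_sum => i _; rewrite (bigD1 i) //= lerDl.
by apply: sumr_ge0 => j _; apply: mxtrace_povmM_ge0.
Qed.

Lemma agree_prob_normal d n (K : 'I_n -> 'M[algC]_d) :
  (0 < d)%N -> (forall i, normal_op (K i)) -> agree_prob K = sharpness K.
Proof.
move=> d_gt0 normalK; rewrite /agree_prob /sharpness mulr_sumr.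
apply: eq_bigr => i _.
rewrite /meas_prob /post_state /max_mixed /povm.
rewrite -!scalemxAl !mul1mx -scalemxAr mulmx1 -!scalemxAl !mxtraceZ -(normalK i).
have [trK0|trK_neq0] := eqVneq (\tr (K i *m adj (K i))) 0.
  by rewrite (mxtrace_mul_adj_eq0 trK0) !mul0mx mxtrace0 !mulr0.
by rewrite invfM invrK; field; rewrite trK_neq0 pnatr_eq0 -lt0n d_gt0.
Qed.

Section BinomialMoments.

Variable R : comPzRingType.

Definition binom_weight (N : nat) (p : R) (k : nat) : R :=
  'C(N, k)%:R * p ^+ k * (1 - p) ^+ (N - k).

Lemma binom_weight_sum N p : \sum_(k < N.+1) binom_weight N p k = 1.
Proof.
have := exprDn (1 - p) p N; rewrite subrK expr1n => ->.
by apply: eq_bigr => k _; rewrite /binom_weight -mulr_natl; ring.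
Qed.

Lemma binom_weight_shift L p (f : nat -> R) :
  \sum_(k < L.+2) k%:R * f k * binom_weight L.+1 p k
  = L.+1%:R * p * \sum_(j < L.+1) f j.+1 * binom_weight L p j.
Proof.
rewrite big_ord_recl /= mulr0n !mul0r add0r mulr_sumr; apply: eq_bigr => j _.
rewrite /binom_weight /bump /= add1n subSS exprS.
have binS : (j.+1%:R * 'C(L.+1, j.+1)%:R : R) = L.+1%:R * 'C(L, j)%:R.
  by rewrite -!natrM -mul_bin_diag.
transitivity (j.+1%:R * 'C(L.+1, j.+1)%:R * (f j.+1 * p * p ^+ j * (1 - p) ^+ (L - j))).
  by ring.
by rewrite binS; ring.
Qed.

Lemma binom_mean N p : \sum_(k < N.+1) k%:R * binom_weight N p k = N%:R * p.
Proof.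
case: N => [|L]; first by rewrite big_ord1 !mul0r.
have := binom_weight_shift L p (fun _ => 1); under eq_bigr do rewrite mulr1.
by move=> ->; under eq_bigr do rewrite mul1r; rewrite binom_weight_sum mulr1.
Qed.

Lemma binom_second_moment N p :
  \sum_(k < N.+1) k%:R ^+ 2 * binom_weight N p k
  = N%:R * p * ((N%:R - 1) * p + 1).
Proof.
case: N => [|L]; first by rewrite big_ord1 expr2 !mul0r.
have := binom_weight_shift L p (fun k => k%:R); under eq_bigr do rewrite -expr2.
move=> ->; congr (_ * _).
under eq_bigr do rewrite -addn1 natrD mulrDl mul1r.
by rewrite big_split /= binom_mean binom_weight_sum -addn1 natrD addrK.
Qed.

Lemma binom_variance N p :
  \sum_(k < N.+1) binom_weight N p k * (k%:R - N%:R * p) ^+ 2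
  = N%:R * p * (1 - p).
Proof.
transitivity (\sum_(k < N.+1) (k%:R ^+ 2 * binom_weight N p k
   - 2 * N%:R * p * (k%:R * binom_weight N p k)
   + (N%:R * p) ^+ 2 * binom_weight N p k)).
  by apply: eq_bigr => k _; ring.
rewrite big_split /= sumrB -!mulr_sumr.
by rewrite binom_second_moment binom_mean binom_weight_sum; ring.
Qed.

End BinomialMoments.

Section Chebyshev.

Variable R : numFieldType.
Variables (N : nat) (p eps : R).
Hypotheses (p_ge0 : 0 <= p) (p_le1 : p <= 1) (eps_gt0 : 0 < eps).
Hypothesis N_gt0 : (0 < N)%N.

Let N_pos : (0 : R) < N%:R. Proof. by rewrite ltr0n. Qed.

Lemma binom_weight_ge0 k : 0 <= binom_weight N p k.
Proof. by rewrite !mulr_ge0 ?exprn_ge0 ?subr_ge0. Qed.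

Lemma dev_sqr_ge (k : nat) : eps < `|k%:R / N%:R - p| ->
  (N%:R * eps) ^+ 2 <= (k%:R - N%:R * p) ^+ 2.
Proof.
move=> far.
have -> : k%:R - N%:R * p = N%:R * (k%:R / N%:R - p).
  by rewrite mulrBr mulrCA divff ?mulr1 // lt0r_neq0.
have dev_real : k%:R / N%:R - p \is Num.real.
  by rewrite realB // ger0_real // divr_ge0.
rewrite !exprMn ler_wpM2l ?exprn_ge0 // -(real_normK dev_real).
by rewrite ler_pXn2r ?nnegrE ?normr_ge0 ?(ltW far) ?(ltW eps_gt0).
Qed.

Lemma binom_chebyshev :
  1 - (N%:R * eps ^+ 2)^-1
  <= \sum_(k < N.+1 | `|k%:R / N%:R - p| <= eps) binom_weight N p k.
Proof.
pose near (k : 'I_N.+1) := `|k%:R / N%:R - p| <= eps.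
have near_compl : \sum_(k < N.+1 | near k) binom_weight N p k
                  = 1 - \sum_(k < N.+1 | ~~ near k) binom_weight N p k.
  by rewrite -(binom_weight_sum N p) [in RHS](bigID near) /= addrK.
have Neps_pos : 0 < (N%:R * eps) ^+ 2 by rewrite exprn_gt0 ?mulr_gt0.
pose dev k := binom_weight N p k * (k%:R - N%:R * p) ^+ 2 / (N%:R * eps) ^+ 2.
have dev_ge0 k : 0 <= dev k.
  have sq_ge0 : 0 <= (k%:R - N%:R * p) ^+ 2.
    by rewrite -realEsqr realB ?realM ?realn ?ger0_real.
  apply: mulr_ge0; last by rewrite invr_ge0 ltW.
  exact: mulr_ge0 (binom_weight_ge0 k) sq_ge0.
rewrite near_compl lerD2l lerN2.
have far_le_dev : \sum_(k < N.+1 | ~~ near k) binom_weight N p k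
                  <= \sum_(k < N.+1) dev k.
  rewrite [X in _ <= X](bigID (fun k => ~~ near k)) /=.
  apply: ler_wpDr; first by apply: sumr_ge0.
  apply: ler_sum => k far; rewrite /dev -mulrA ler_peMr ?binom_weight_ge0 //.
  rewrite ler_pdivlMr // mul1r dev_sqr_ge //.
  by rewrite real_ltNge ?normr_real ?gtr0_real.
apply: (le_trans far_le_dev); rewrite -mulr_suml binom_variance.
have -> : (N%:R * eps ^+ 2)^-1 = N%:R * 1 / (N%:R * eps) ^+ 2.
  by field; rewrite !lt0r_neq0.
apply: ler_wpM2r; first by rewrite invr_ge0 ltW.
by rewrite -mulrA ler_wpM2l ?ler0n // mulr_ile1 ?gerBl ?subr_ge0.
Qed.

End Chebyshev.

Lemma sharpness_estimate N eps d n (K : 'I_n -> 'M[algC]_d) :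
  0 < eps -> (0 < N)%N -> (0 < d)%N -> is_kraus K ->
  (forall i, normal_op (K i)) ->
  1 - (N%:R * eps ^+ 2)^-1
  <= binom_prob N (agree_prob K) (fun k => `|k%:R / N%:R - sharpness K| <= eps).
Proof.
move=> eps_gt0 N_gt0 d_gt0 krausK normalK; rewrite agree_prob_normal //.
exact: binom_chebyshev (sharpness_ge0 K) (sharpness_le1 d_gt0 krausK) eps_gt0 N_gt0.
Qed.

Lemma agree_prob_unif_dev d : (0 < d)%N -> agree_prob (unif_dev d) = d%:R^-1.
Proof.
move=> d_gt0.
set c := (sqrtC (d%:R : algC))^-1.
have unifE i : unif_dev d i = c%:M by rewrite /unif_dev scalemx1.
have c_conj : c^* = c by rewrite geC0_conj // invr_ge0 sqrtC_ge0 ler0n.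
have c_sq : c * c = d%:R^-1 by rewrite -expr2 exprVn sqrtCK.
rewrite agree_prob_normal // => [|i]; last by rewrite /normal_op unifE adj_scalar c_conj.
rewrite /sharpness /povm.
under eq_bigr do rewrite unifE adj_scalar c_conj -!scalar_mxM mxtrace_scalar c_sq.
have d_neq0 : (d%:R : algC) != 0 by rewrite pnatr_eq0 -lt0n.
rewrite sumr_const card_ord -mulrnA -[_ *+ (d * d)]mulr_natr natrM mulrA.
by rewrite divfK // mulVf // mulr1.
Qed.

Lemma agree_prob_proj_dev d (U : 'M[algC]_d) :
  (0 < d)%N -> unitary U -> agree_prob (proj_dev U) = 1.
Proof.
move=> d_gt0 [UU1 _].
have proj_adj i : adj (proj_dev U i) = proj_dev U i.
  by rewrite /proj_dev !adjM adjK adj_delta !mulmxA.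
have proj_idem i : proj_dev U i *m proj_dev U i = proj_dev U i.
  rewrite /proj_dev !mulmxA -[U *m _ *m _ *m U]mulmxA UU1 mulmx1.
  by rewrite -[U *m _ *m _]mulmxA mul_delta_mx.
have tr_proj i : \tr (proj_dev U i) = 1.
  rewrite /proj_dev mxtrace_mulC mulmxA UU1 mul1mx /mxtrace (bigD1 i) //=.
  by rewrite big1 ?addr0 ?mxE ?eqxx // => j /negPf ji; rewrite mxE ji.
rewrite agree_prob_normal // => [|i]; last by rewrite /normal_op proj_adj.
rewrite /sharpness /povm; under eq_bigr do rewrite proj_adj !proj_idem tr_proj.
by rewrite sumr_const card_ord mulVf // pnatr_eq0 -lt0n.
Qed.

Lemma binom_prob1_eq1 (p : algC) : binom_prob 1 p (fun k => k == 1%N) = p.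
Proof.
rewrite /binom_prob big_mkcond !big_ord_recr big_ord0 /=.
by rewrite binn subnn expr0 expr1 !add0r !mul1r mulr1.
Qed.

Lemma binom_prob1_neq1 (p : algC) : binom_prob 1 p (fun k => k != 1%N) = 1 - p.
Proof.
rewrite /binom_prob big_mkcond !big_ord_recr big_ord0 /=.
by rewrite bin0 subn0 expr0 expr1 add0r addr0 !mul1r.
Qed.

Lemma success_one_round d (U : 'M[algC]_d) : (0 < d)%N -> unitary U ->
  success 1 (fun k => k == 1%N) (unif_dev d) (proj_dev U) = 1 - (2 * d%:R)^-1.
Proof.
move=> d_gt0 unitaryU.
rewrite /success binom_prob1_neq1 binom_prob1_eq1.
rewrite agree_prob_unif_dev // agree_prob_proj_dev //.
by field; rewrite pnatr_eq0 -lt0n d_gt0.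
Qed.

Theorem theorem2 :
  (* sharpness estimation with constant additive error eps and failure
     probability delta, using a number of rounds N (2N queries) independent of
     the dimension d and of the (normal) measurement *)
  (forall eps delta : algC, 0 < eps -> 0 < delta ->
     exists N : nat,
       forall (d n : nat) (K : 'I_n -> 'M[algC]_d),
         (0 < d)%N -> is_kraus K -> (forall i, normal_op (K i)) ->
         1 - delta <=
           binom_prob N (agree_prob K)
             (fun k => `|k%:R / N%:R - sharpness K| <= eps))
  /\
  (* hence the black-box distinguishing task is solved with constant success
     probability using O(1) queries, for every unitary U (so also on average
     over Haar-random U) *)
  (exists (N : nat) (decide : nat -> bool),
     forall (d : nat) (U : 'M[algC]_d), (1 < d)%N -> unitary U ->
       2 / 3 <= success N decide (unif_dev d) (proj_dev U)).
Proof.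
split=> [eps delta eps_gt0 delta_gt0|].
  have bound_ge0 : 0 <= delta^-1 / eps ^+ 2.
    by rewrite divr_ge0 ?exprn_ge0 ?invr_ge0 ?ltW.
  exists (Num.bound (delta^-1 / eps ^+ 2)).+1 => d n K d_gt0 krausK normalK.
  apply: le_trans (sharpness_estimate eps_gt0 (ltn0Sn _) d_gt0 krausK normalK).
  rewrite lerD2l lerN2 -[X in _ <= X]invrK lef_pV2 ?posrE ?invr_gt0 ?mulr_gt0 ?exprn_gt0 //.
  rewrite -ler_pdivrMr ?exprn_gt0 //.
  by rewrite (le_trans (ltW (archi_boundP bound_ge0))) ?ler_nat.
exists 1%N, (fun k => k == 1%N) => d U d_gt1 unitaryU.
rewrite success_one_round ?(ltnW d_gt1) //.
have d_ge2 : 0 <= d%:R - 2 :> algC by rewrite subr_ge0 ler_nat.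
have -> : 1 - (2 * d%:R)^-1 = 2 / 3 + (2 * (d%:R - 2) + 1) / (6 * d%:R) :> algC.
  by field; rewrite pnatr_eq0 -lt0n ltnW.
by rewrite lerDl divr_ge0 ?addr_ge0 ?mulr_ge0 ?ler0n.
Qed.
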